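(* Let $\mathcal{M}=(S,A,\rho_0,\mathbb{P},c,\gamma)$ be an MDP and let $\pi$ be a policy with CPT-Q function $Q^\pi_{cpt}$ and CPT-V function $V^\pi_{cpt}$. Let $\pi'$ be a policy that differs from $\pi$ at step $t$ and is identical (in distribution) to $\pi$ at all subsequent steps. If $$\sum_{a_t\in A} \pi'(a_t\mid s_t)\,Q^\pi_{cpt}(s_t,a_t) \le V^\pi_{cpt}(s_t)\quad\text{for all } s_t\in S,$$ then $\pi'$ is improved compared to $\pi$, i.e. $V^{\pi'}_{cpt}(s)\le V^\pi_{cpt}(s)$ for all $s\in S$.
   Context: An MDP is a tuple $(S,A,\rho_0,\mathbb{P},c,\gamma)$ with finite state set $S$, finite action set $A$, initial distribution $\rho_0$, transition probabilities $\mathbb{P}(s'\mid s,a)$, cost $c(s,a)$ (a random variable with $|c|<\infty$) incurred when action $a$ is taken in state $s$, and discount factor $\gamma\in(0,1]$. A policy $\pi(\cdot\mid s)$ is a probability distribution over $A$ for each $s$. CPT-value: given utility functions $u^+,u^-:\mathbb{R}\to\mathbb{R}_{\ge0}$ that are continuous with bounded first moment, with $u^+(x)=0$ for $x\le0$ and $u^+$ non-decreasing otherwise, $u^-(x)=0$ for $x\ge0$ and $u^-$ non-increasing otherwise, and weighting functions $w^+,w^-:[0,1]\to[0,1]$ Lipschitz continuous, non-decreasing, with $w^\pm(0)=0$, $w^\pm(1)=1$, the CPT-value of a random variable $Y$ is $$\rho_{cpt}(Y)=\int_0^\infty w^+(\mathbb{P}(u^+(Y)>z))\,dz-\int_0^\infty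 w^-(\mathbb{P}(u^-(Y)>z))\,dz.$$ The CPT-Q function of $\pi$ is defined by $$Q^\pi_{cpt}(s,a)=\rho_{cpt}\Big(c(s,a)+\gamma\sum_{s'}\mathbb{P}(s'\mid s,a)\sum_{a'}\pi(a'\mid s')Q^\pi_{cpt}(s',a')\Big),$$ and the CPT-V function by $V^\pi_{cpt}(s)=\sum_a\pi(a\mid s)Q^\pi_{cpt}(s,a)$; equivalently $V^\pi_{cpt}(s_t)=\rho_{cpt}\big(c(s_t,a^\pi_t)+\gamma\sum_{s_{t+1}}\mathbb{P}(s_{t+1}\mid s_t,a^\pi_t)V^\pi_{cpt}(s_{t+1})\big)$ where $a^\pi_t$ is the action chosen by $\pi$. For the policy $\pi'$ that uses $\pi'$ at step $t$ and $\pi$ afterwards, its CPT-V at step $t$ is $V^{\pi'}_{cpt}(s_t)=\sum_{a_t}\pi'(a_t\mid s_t)\rho_{cpt}\big(c(s_t,a_t)+\gamma\sum_{s_{t+1}}\mathbb{P}(s_{t+1}\mid s_t,a_t)V^{\pi'}_{cpt}(s_{t+1})\big)$ with the continuation values those of $\pi$. A policy $\pi'$ is improved compared to $\pi$ iff $V^{\pi'}_{cpt}(s)\le V^\pi_{cpt}(s)$ for all $s\in S$. *)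

From HB Require Import structures.
From mathcomp Require Import all_boot all_order all_algebra.
From mathcomp Require Import all_classical all_reals all_analysis.
Set Implicit Arguments. Unset Strict Implicit. Unset Printing Implicit Defensive.
Import Order.TTheory GRing.Theory Num.Theory numFieldNormedType.Exports.
Local Open Scope classical_set_scope.
Local Open Scope ring_scope.

Section CPT.
Context {R : realType} {d : measure_display} {T : measurableType d}.

Definition rho_cpt (Pr : probability T R) (up um wp wm : R -> R)
    (Y : T -> R) : R :=
  fine (\int[lebesgue_measure]_(z in `[0%R, +oo[%classic)
          (wp (fine (Pr [set x | z < up (Y x)])))%:E)
  - fine (\int[lebesgue_measure]_(z in `[0%R, +oo[%classic)
          (wm (fine (Pr [set x | z < um (Y x)])))%:E).

Definition utility_plus (u : R -> R) : Prop :=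
  continuous u /\ (forall x, 0 <= u x) /\ (forall x, x <= 0 -> u x = 0) /\
  (forall x y, 0 < x -> x <= y -> u x <= u y).
Definition utility_minus (u : R -> R) : Prop :=
  continuous u /\ (forall x, 0 <= u x) /\ (forall x, 0 <= x -> u x = 0) /\
  (forall x y, x <= y -> y < 0 -> u y <= u x).
Definition weighting (w : R -> R) : Prop :=
  (exists k : R, forall x y, 0 <= x <= 1 -> 0 <= y <= 1 ->
      `|w x - w y| <= k * `|x - y|) /\
  (forall x y, 0 <= x -> x <= y -> y <= 1 -> w x <= w y) /\
  (forall x, 0 <= x <= 1 -> 0 <= w x <= 1) /\
  w 0 = 0 /\ w 1 = 1.

Variables (S A : finType).

Definition is_distr (p : S -> R) : Prop :=
  (forall s, 0 <= p s) /\ \sum_(s : S) p s = 1.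
Definition is_policy (pi : S -> A -> R) : Prop :=
  (forall s a, 0 <= pi s a) /\ (forall s, \sum_(a : A) pi s a = 1).
Definition is_transition (P : S -> A -> S -> R) : Prop :=
  (forall s a s', 0 <= P s a s') /\ (forall s a, \sum_(s' : S) P s a s' = 1).

Definition Vcpt (pi : S -> A -> R) (Q : S -> A -> R) (s : S) : R :=
  \sum_(a : A) pi s a * Q s a.

Definition is_cpt_Q (Pr : probability T R) (up um wp wm : R -> R)
    (P : S -> A -> S -> R) (c : S -> A -> T -> R) (gamma : R)
    (pi : S -> A -> R) (Q : S -> A -> R) : Prop :=
  forall s a, Q s a =
    rho_cpt Pr up um wp wm
      (fun x => c s a x + gamma * \sum_(s' : S) P s a s' * Vcpt pi Q s').

(* CPT-V at step t of the policy using pi' at step t and pi afterwards *)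
Definition V_switch (Pr : probability T R) (up um wp wm : R -> R)
    (P : S -> A -> S -> R) (c : S -> A -> T -> R) (gamma : R)
    (pi' pi : S -> A -> R) (Q : S -> A -> R) (s : S) : R :=
  \sum_(a : A) pi' s a *
    rho_cpt Pr up um wp wm
      (fun x => c s a x + gamma * \sum_(s' : S) P s a s' * Vcpt pi Q s').

End CPT.

From HB Require Import structures.
From mathcomp Require Import all_boot all_order all_algebra.
From mathcomp Require Import all_classical all_reals all_analysis.
Set Implicit Arguments. Unset Strict Implicit.
Import Order.TTheory GRing.Theory Num.Theory.
Local Open Scope ring_scope.

Lemma V_switchE (R : realType) (d : measure_display) (T : measurableType d)
    (Pr : probability T R) (S A : finType) (up um wp wm : R -> R)
    (P : S -> A -> S -> R) (c : S -> A -> T -> R) (gamma : R)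
    (pi pi' Q : S -> A -> R) :
  is_cpt_Q Pr up um wp wm P c gamma pi Q ->
  forall s, V_switch Pr up um wp wm P c gamma pi' pi Q s =
            \sum_(a : A) pi' s a * Q s a.
Proof. by move=> HQ s; apply: eq_bigr => a _; rewrite -HQ. Qed.

Theorem proposition1 (R : realType) (d : measure_display) (T : measurableType d)
  (Pr : probability T R) (S A : finType)
  (rho0 : S -> R) (P : S -> A -> S -> R) (c : S -> A -> T -> R) (gamma : R)
  (up um wp wm : R -> R) (pi pi' Q : S -> A -> R) :
  is_distr rho0 -> is_transition P ->
  (forall s a, measurable_fun setT (c s a)) ->
  0 < gamma -> gamma <= 1 ->
  utility_plus up -> utility_minus um -> weighting wp -> weighting wm ->
  is_policy pi -> is_policy pi' ->
  is_cpt_Q Pr up um wp wm P c gamma pi Q ->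
  (forall s, \sum_(a : A) pi' s a * Q s a <= Vcpt pi Q s) ->
  forall s, V_switch Pr up um wp wm P c gamma pi' pi Q s <= Vcpt pi Q s.
Proof.
move=> _ _ _ _ _ _ _ _ _ _ _ HQ improving s.
by rewrite (V_switchE pi' HQ) improving.
Qed.
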